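(* Let $T$ be a rooted binary tree with black/white-coloured leaves and the induced node colouring and classification as described in the context, and suppose $T$ contains more than one maximal black subtree. Then no SPR operation on $T$ belonging to the class $(\mathrm{G},\ast,\ast,\ast)$ (i.e. pruning a grey node) produces a compatible tree.
   Context: All trees are rooted binary trees; every non-leaf node has exactly two children and every non-root node $n$ has a parent $\mathrm{pa}(n)$. A ''subtree'' always means a node together with all of its descendants. Colouring: each leaf is coloured black (B) or white (W); an internal node is black if both children are black, white if both children are white, and grey (G) otherwise. A subtree is black (resp. white) if all its nodes are black (resp. white); it is maximal if no strictly larger subtree containing it is black (resp. white). Classification: a black or white node is of type ''r'' if it is the root of a maximal subtree of its own colour, and of type ''b'' otherwise; all grey nodes are of type ''b'' by convention. A tree is compatible if it contains at most one maximal black subtree. SPR operation $(u,v)$ on $T$: $u$ is a non-root node, $v$ is a node with $v\notin\{u,\mathrm{pa}(u)\}$ and $v$ not a descendant of $u$; the subtree rooted at $u$ is pruned (the edge to $u$ is removed and $\mathrm{pa}(u)$ deleted, its other child taking its place), then regrafted by inserting a new node on the edge from $v$ to its parent (or as a new root above $v$ if $v$ is the root) whose two children are $v$ and $u$; colours of the resulting tree are recomputed by the same rule. The operation belongs to class $(x,y,z,w)$ where $x,z\in\{\mathrm{B},\mathrm{W},\mathrm{G}\}$ are the colours in $T$ of $u$ and $v$, and $y,w\in\{\mathrm{r},\mathrm{b}\}$ their classifications in $T$; $\ast$ denotes any value. *)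

From mathcomp Require Import all_boot.
Set Implicit Arguments. Unset Strict Implicit. Unset Printing Implicit Defensive.

(* Rooted binary trees; leaves carry a colour: true = black (B), false = white (W). *)
Inductive tree := Leaf of bool | Node of tree & tree.

Inductive colour := Bk | Wh | Gr.

Fixpoint colour_of (t : tree) : colour :=
  match t with
  | Leaf true => Bk
  | Leaf false => Wh
  | Node l r =>
      match colour_of l, colour_of r with
      | Bk, Bk => Bk
      | Wh, Wh => Wh
      | _, _ => Gr
      end
  end.

(* Nodes are addressed by their path from the root (false = left, true = right). *)
Fixpoint subt (t : tree) (p : seq bool) : option tree :=
  match p with
  | [::] => Some t
  | b :: p' => match t with
               | Leaf _ => None
               | Node l r => subt (if b then r else l) p'
               end
  end.

Definition is_node (t : tree) (p : seq bool) : bool :=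
  if subt t p is Some _ then true else false.

Definition node_colour (t : tree) (p : seq bool) : option colour :=
  option_map colour_of (subt t p).

Definition pa (p : seq bool) : seq bool := take (size p).-1 p.

Definition black_subtree (t : tree) (p : seq bool) : Prop :=
  is_node t p /\ forall q, is_node t (p ++ q) -> node_colour t (p ++ q) = Some Bk.

Definition maximal_black (t : tree) (p : seq bool) : Prop :=
  black_subtree t p /\
  forall q, prefix q p -> q != p -> ~ black_subtree t q.

Definition compatible (t : tree) : Prop :=
  forall p1 p2, maximal_black t p1 -> maximal_black t p2 -> p1 = p2.

Fixpoint replace (t : tree) (p : seq bool) (s : tree) : tree :=
  match p with
  | [::] => s
  | b :: p' => match t with
               | Leaf c => Leaf c
               | Node l r => if b then Node l (replace r p' s)
                             else Node (replace l p' s) r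
               end
  end.

Definition valid_spr (t : tree) (u v : seq bool) : Prop :=
  [&& u != [::], is_node t u, is_node t v,
      v != u, v != pa u & ~~ prefix u v].

(* The tree resulting from SPR (u,v): prune the subtree at u (its parent pa u is
   deleted and the sibling takes its place), then regraft by inserting a new node
   above v (the image of v in the pruned tree) whose children are v and u. *)
Definition spr (t : tree) (u v : seq bool) : tree :=
  let p := pa u in
  let b := nth false u (size u).-1 in
  let sib := rcons p (~~ b) in
  let su := odflt (Leaf false) (subt t u) in
  let ssib := odflt (Leaf false) (subt t sib) in
  let t1 := replace t p ssib in
  let v' := if prefix sib v then p ++ drop (size sib) v else v in
  let sv := odflt (Leaf false) (subt t1 v') in
  replace t1 v' (Node sv su).

From mathcomp Require Import all_boot zify.
Set Implicit Arguments. Unset Strict Implicit. Unset Printing Implicit Defensive.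

(* The subtree S at the pruned grey node is regrafted intact under a new node, which is
   grey because S is; so every maximal black subtree of S stays maximal in the new tree.
   Replacing the regrafted node by a white leaf leaves exactly the other maximal black
   subtrees, and there are none iff no leaf outside S is black; the multiset of leaves
   outside S is not changed by the move.  Hence if the new tree is compatible, S has at
   most one maximal black subtree and carries all black leaves of T, so the maximal black
   subtrees of T are those of S: at most one of them. *)

Definition is_black (t : tree) : bool := if colour_of t is Bk then true else false.

Lemma is_black_node l r : is_black (Node l r) = is_black l && is_black r.
Proof. by rewrite /is_black /=; case: (colour_of l); case: (colour_of r). Qed.

Lemma subt_cat t p q : subt t (p ++ q) = obind (subt^~ q) (subt t p).
Proof. by elim: p t => [|b p IH] [c|l r] //=; case: q. Qed.

Lemma subt_black s q s' : is_black s -> subt s q = Some s' -> is_black s'.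
Proof.
elim: s q => [c|l IHl r IHr] [|b q] //= s_black; [by case=> <- | by case=> <- |].
by move: s_black; rewrite is_black_node => /andP[? ?]; case: b; [apply: IHr | apply: IHl].
Qed.

Definition black_at (t : tree) (p : seq bool) : bool :=
  if subt t p is Some s then is_black s else false.

Lemma black_subtreeE t p : black_subtree t p <-> black_at t p.
Proof.
rewrite /black_subtree /is_node /node_colour /black_at; split.
- case Ep: (subt t p) => [s|] [] // _ /(_ [::]).
  by rewrite cats0 Ep /= => /(_ isT) [s_black]; rewrite /is_black s_black.
- case Ep: (subt t p) => [s|] // s_black; split=> // q.
  rewrite subt_cat Ep /=; case Eq: (subt s q) => [s'|] //= _.
  by move: (subt_black s_black Eq); rewrite /is_black; case: (colour_of s').
Qed.

Lemma maximal_blackE t p : maximal_black t p <->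
  black_at t p /\ forall q, prefix q p -> q != p -> ~~ black_at t q.
Proof.
rewrite /maximal_black black_subtreeE.
split=> -[p_black p_max]; split=> // q qp qNp.
- by apply/negP => /black_subtreeE; apply: p_max.
- by move/black_subtreeE; apply/negP/p_max.
Qed.

Lemma maximal_black_nil t : maximal_black t [::] <-> is_black t.
Proof. by rewrite maximal_blackE; case: t => [c|l r]; split=> [[] | ] //; split=> // -[]. Qed.

Lemma maximal_black_leaf_cons c b p : ~ maximal_black (Leaf c) (b :: p).
Proof. by rewrite maximal_blackE => -[]. Qed.

Lemma maximal_black_below_black t b p : is_black t -> ~ maximal_black t (b :: p).
Proof.
rewrite maximal_blackE => t_black [_ /(_ [::] isT isT)].
by case: t t_black => [c|l r] t_black; rewrite /black_at /= t_black.
Qed.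

Lemma maximal_black_cons l r b p : ~~ is_black (Node l r) ->
  maximal_black (Node l r) (b :: p) <-> maximal_black (if b then r else l) p.
Proof.
move=> lr_nonblack; rewrite !maximal_blackE; split=> -[p_black p_max]; split=> //.
- by move=> q qp qNp; apply: (p_max (b :: q)); rewrite ?prefix_cons ?eqseq_cons eqxx.
- case=> [|b' q]; first by rewrite /black_at /=.
  by rewrite prefix_cons eqseq_cons => /andP[/eqP -> qp]; rewrite eqxx; apply: p_max.
Qed.

Fixpoint max_blacks (t : tree) : seq (seq bool) :=
  if is_black t then [:: [::]] else
  if t is Node l r then map (cons false) (max_blacks l) ++ map (cons true) (max_blacks r)
  else [::].

Lemma mem_cat_map_cons (A B : seq (seq bool)) b p :
  (b :: p \in map (cons false) A ++ map (cons true) B) = (p \in if b then B else A).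
Proof.
have cons_inj c : injective (@cons bool c) by move=> x y [].
have cons_notin c c' s (C : seq (seq bool)) : c != c' -> (c :: s \in map (cons c') C) = false.
  by move=> cNc'; apply/mapP => -[s' _ [eq_cc' _]]; rewrite eq_cc' eqxx in cNc'.
rewrite mem_cat; case: b.
- by rewrite (cons_notin _ false) // (mem_map (cons_inj true)).
- by rewrite (cons_notin _ true) // (mem_map (cons_inj false)) orbF.
Qed.

Lemma mem_max_blacks t p : p \in max_blacks t <-> maximal_black t p.
Proof.
elim: t p => [c|l IHl r IHr] [|b p] /=.
- by rewrite maximal_black_nil; case: c.
- by case: c => //; split=> // /maximal_black_leaf_cons.
- rewrite maximal_black_nil; case: ifP => //; split=> //.
  by rewrite mem_cat => /orP[] /mapP[].
- case: ifP => [lr_black | /negbT lr_nonblack].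
  + by split=> // /(maximal_black_below_black lr_black).
  + by rewrite mem_cat_map_cons maximal_black_cons //; case: b.
Qed.

Lemma uniq_max_blacks t : uniq (max_blacks t).
Proof.
have cons_inj c : injective (@cons bool c) by move=> x y [].
elim: t => [c|l IHl r IHr] /=; case: is_black => //=.
rewrite cat_uniq !(map_inj_uniq (cons_inj _)) IHl IHr /= andbT.
by apply/hasPn => _ /mapP[s _ ->]; apply/mapP => -[].
Qed.

Definition n_max_black (t : tree) : nat := size (max_blacks t).

Lemma compatible_n_max_black t : compatible t -> n_max_black t <= 1.
Proof.
rewrite /n_max_black => t_compat; have := uniq_max_blacks t.
have mem_maximal p : p \in max_blacks t -> maximal_black t p by move/mem_max_blacks.
case: (max_blacks t) mem_maximal => [|p1 [|p2 s]] //= mem_maximal /andP[].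
rewrite inE negb_or => /andP[/eqP p1Np2 _] _; exfalso; apply: p1Np2.
by apply: t_compat; apply: mem_maximal; rewrite !inE eqxx ?orbT.
Qed.

Lemma n_max_black_gt1 t p1 p2 : p1 <> p2 ->
  maximal_black t p1 -> maximal_black t p2 -> 1 < n_max_black t.
Proof.
move=> p1Np2 /mem_max_blacks p1_in /mem_max_blacks p2_in; rewrite /n_max_black.
case: (max_blacks t) p1_in p2_in => [|p [|? ?]] //; rewrite !inE => /eqP E1 /eqP E2.
by case: p1Np2; rewrite E1 E2.
Qed.

Fixpoint black_leaves (t : tree) : nat :=
  if t is Node l r then black_leaves l + black_leaves r else is_black t.

Lemma n_max_black_black t : is_black t -> n_max_black t = 1.
Proof. by rewrite /n_max_black; case: t => [[]|l r] //= ->. Qed.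

Lemma n_max_black_node l r : ~~ is_black (Node l r) ->
  n_max_black (Node l r) = n_max_black l + n_max_black r.
Proof. by rewrite /n_max_black /= => /negbTE ->; rewrite size_cat !size_map. Qed.

Lemma black_leaves_gt0 t : colour_of t <> Wh -> 0 < black_leaves t.
Proof.
elim: t => [[]|l IHl r IHr] //= t_nonwhite; rewrite addn_gt0; apply/orP.
case El: (colour_of l) t_nonwhite; case Er: (colour_of r) => //= _;
  by [left; apply: IHl; rewrite El | right; apply: IHr; rewrite Er].
Qed.

Lemma n_max_black_eq0 t : (n_max_black t == 0) = (black_leaves t == 0).
Proof.
elim: t => [[]|l IHl r IHr] //.
have [lr_black | lr_nonblack] := boolP (is_black (Node l r)).
- rewrite n_max_black_black //; apply/esym/negbTE; rewrite -lt0n.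
  by apply: black_leaves_gt0; move: lr_black; rewrite /is_black; case: colour_of.
- by rewrite n_max_black_node //= !addn_eq0 IHl IHr.
Qed.

Lemma n_max_black_grey t : colour_of t = Gr -> 0 < n_max_black t.
Proof. by move=> t_grey; rewrite lt0n n_max_black_eq0 -lt0n black_leaves_gt0 ?t_grey. Qed.

Lemma replace_subt t q s : subt t q = Some s -> replace t q s = t.
Proof.
elim: q t => [|b q IH] [c|l r] //=; [by case=> -> | by case=> -> |].
by case: b => /IH ->.
Qed.

Lemma subt_replace t p s : is_node t p -> subt (replace t p s) p = Some s.
Proof.
elim: p t => [|b p IH] [c|l r] //= p_node; try by case: s.
by case: b p_node => /IH /= ->.
Qed.

Lemma is_black_replace t q s : is_node t q -> ~~ is_black s -> ~~ is_black (replace t q s).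
Proof.
elim: q t => [|b q IH] [c|l r] //= q_node s_nonblack.
by case: b q_node => /IH q_nonblack; rewrite is_black_node negb_and q_nonblack ?orbT.
Qed.

Lemma n_max_black_replace t q s : is_node t q -> ~~ is_black s ->
  n_max_black (replace t q s) = n_max_black (replace t q (Leaf false)) + n_max_black s.
Proof.
elim: q t => [|b q IH] [c|l r] //= q_node s_nonblack.
have nonblack s' : ~~ is_black s' -> ~~ is_black (replace (if b then r else l) q s').
  by apply: is_black_replace; case: b q_node.
by case: b q_node nonblack => q_node nonblack;
  rewrite !n_max_black_node ?IH ?is_black_node ?negb_and ?nonblack ?orbT //; lia.
Qed.

Lemma black_leaves_replace t q s0 s : subt t q = Some s0 ->
  black_leaves (replace t q s) + black_leaves s0 = black_leaves t + black_leaves s.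
Proof.
elim: q t => [|b q IH] [c|l r] //=; [by case=> <-; rewrite addnC | by case=> <-; rewrite addnC |].
by case: b => /IH /=; lia.
Qed.

Lemma is_node_replace t p s q : is_node t q ->
  ~~ prefix (rcons p false) q -> ~~ prefix (rcons p true) q -> is_node (replace t p s) q.
Proof.
elim: p t q => [|b p IH] [c|l r] [|b' q] //=; try by case: s.
- by case: b'; rewrite prefix0s.
- by case: b.
- by case: b; case: b' => //= q_node; apply: IH.
Qed.

Lemma n_max_black_subtree t q s : subt t q = Some s -> ~~ is_black s ->
  black_leaves t = black_leaves s -> n_max_black t = n_max_black s.
Proof.
move=> q_s s_nonblack same_leaves.
have q_node : is_node t q by rewrite /is_node q_s.
rewrite -{1}(replace_subt q_s) n_max_black_replace //.
suff /eqP -> : n_max_black (replace t q (Leaf false)) == 0 by [].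
rewrite n_max_black_eq0; apply/eqP.
by have := black_leaves_replace (Leaf false) q_s; rewrite same_leaves /=; lia.
Qed.

Lemma n_max_black_graft_grey t q x s : subt t q = Some x -> colour_of s = Gr ->
  n_max_black (replace t q (Node x s)) <= 1 -> black_leaves t = 0 /\ n_max_black s <= 1.
Proof.
move=> q_x s_grey; have q_node : is_node t q by rewrite /is_node q_x.
have s_nonblack : ~~ is_black s by rewrite /is_black s_grey.
rewrite n_max_black_replace ?is_black_node ?(negbTE s_nonblack) ?andbF //.
rewrite n_max_black_node ?is_black_node ?(negbTE s_nonblack) ?andbF //.
move=> le1; have s_pos := n_max_black_grey s_grey.
have outside0 : black_leaves (replace t q (Leaf false)) = 0.
  by apply/eqP; rewrite -n_max_black_eq0; apply/eqP; lia.
have x0 : black_leaves x = 0 by apply/eqP; rewrite -n_max_black_eq0; apply/eqP; lia.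
split; last by lia.
by have := black_leaves_replace (Leaf false) q_x; rewrite x0 outside0 /=; lia.
Qed.

Lemma subt_rcons t p b :
  subt t (rcons p b) = if subt t p is Some (Node l r) then Some (if b then r else l) else None.
Proof.
rewrite -cats1 subt_cat; case: (subt t p) => [[c|l r]|] //=.
by case: b; [case: r | case: l].
Qed.

Lemma pa_rcons p b : pa (rcons p b) = p.
Proof. by rewrite /pa size_rcons -cats1 take_size_cat. Qed.

Lemma black_leaves_prune t p l r b : subt t p = Some (Node l r) ->
  black_leaves t =
  black_leaves (replace t p (if ~~ b then r else l)) + black_leaves (if b then r else l).
Proof. by move/(black_leaves_replace (if ~~ b then r else l)); case: b => /=; lia. Qed.

Lemma is_node_prune t p l r b v : subt t p = Some (Node l r) ->
  is_node t v -> ~~ prefix (rcons p b) v ->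
  is_node (replace t p (if ~~ b then r else l))
    (if prefix (rcons p (~~ b)) v then p ++ drop (size (rcons p (~~ b))) v else v).
Proof.
move=> p_lr v_node v_notbelow_u; have p_node : is_node t p by rewrite /is_node p_lr.
case: (boolP (prefix (rcons p (~~ b)) v)) => [/prefixP[w v_eq] | v_notbelow_sib].
- move: v_node; rewrite v_eq drop_size_cat // /is_node !subt_cat subt_replace //=.
  by rewrite subt_rcons p_lr.
- by case: b v_notbelow_u v_notbelow_sib => /= ? ?; apply: is_node_replace.
Qed.

Theorem lemma5 (t : tree) :
  (exists p1 p2, p1 <> p2 /\ maximal_black t p1 /\ maximal_black t p2) ->
  forall u v : seq bool, valid_spr t u v -> node_colour t u = Some Gr ->
  ~ compatible (spr t u v).
Proof.
move=> [p1 [p2 [p1Np2 [max1 max2]]]] u v.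
move=> /and5P[u_nonroot _ v_node _ /andP[_ v_notbelow_u]].
have two_max := n_max_black_gt1 p1Np2 max1 max2.
case/lastP: u u_nonroot v_notbelow_u => [//|p b] _ v_notbelow_u.
rewrite /node_colour subt_rcons; case p_lr: (subt t p) => [[c|l r]|] //= [S_grey].
rewrite /spr pa_rcons nth_last last_rcons !subt_rcons p_lr /=.
have := is_node_prune p_lr v_node v_notbelow_u.
rewrite /is_node; case v'_x: (subt _ _) => [x|//] _.
move=> /compatible_n_max_black /(n_max_black_graft_grey v'_x S_grey) [pruned0 S_le1].
have := black_leaves_prune b p_lr; rewrite pruned0 add0n => same_leaves.
have S_nonblack : ~~ is_black (if b then r else l) by rewrite /is_black S_grey.
have u_S : subt t (rcons p b) = Some (if b then r else l) by rewrite subt_rcons p_lr.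
by rewrite (n_max_black_subtree u_S S_nonblack same_leaves) ltnNge S_le1 in two_max.
Qed.
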